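(* Let $k\ge1$, $G=(V,E)$ an inductively $k$-independent graph with $k$-independence ordering $v_1,\dots,v_n$, $f:2^V\to\mathbb{R}_{\ge0}$ monotone submodular with $f(\emptyset)=0$, and $\beta>0$. Run algorithm PREEMPTIVE-GREEDY (described in the context), let $U$ be the set of all vertices ever contained in $S$ during the run, and for each vertex $v_i$ let $C_i$ be the conflict set computed when $v_i$ is processed. Let $T\subseteq V$ be an independent set of $G$ disjoint from $U$. Then each $u\in U$ belongs to $C_i$ for at most $k$ indices $i$ with $v_i\in T$.
   Context: $N(v)$ is the neighbourhood of $v$ (excluding $v$); $G$ is inductively $k$-independent with $k$-independence ordering $v_1,\dots,v_n$ if for every $i$, $G[N(v_i)\cap\{v_i,\dots,v_n\}]$ has no independent set of size more than $k$. Order $V$ by $v_1<\dots<v_n$. For $S\subseteq V$: $f_S(v)=f(S\cup\{v\})-f(S)$, and $\nu_f(S,u)=f_{S'}(u)$ where $S'=\{s\in S:s<u\}$. Algorithm PREEMPTIVE-GREEDY (parameter $\beta>0$): start with $S=\emptyset$; for $i=1,\dots,n$: let $C_i=N(v_i)\cap S$ for the current $S$; if $f_S(v_i)\ge(1+\beta)\sum_{u\in C_i}\nu_f(S,u)$, replace $S$ by $(S\setminus C_i)\cup\{v_i\}$. Return the final $S$. *)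

(* Vertices are 'I_n; the k-independence ordering v_1,...,v_n
   is the natural order of 'I_n (v_{i+1} = ordinal i). *)
From HB Require Import structures.
From mathcomp Require Import all_boot all_order all_algebra.
Set Implicit Arguments. Unset Strict Implicit. Unset Printing Implicit Defensive.
Import Order.TTheory GRing.Theory Num.Theory.
Local Open Scope ring_scope.

Section PG.
Variables (n : nat) (e : rel 'I_n).

Definition simple_graph := symmetric e /\ irreflexive e.

Definition nbhd (v : 'I_n) : {set 'I_n} := [set u | e v u].

Definition independent (A : {set 'I_n}) : Prop :=
  forall x y, x \in A -> y \in A -> ~~ e x y.

Definition inductively_k_independent (k : nat) : Prop :=
  forall (i : 'I_n) (A : {set 'I_n}),
    A \subset nbhd i :&: [set j : 'I_n | (i <= j)%N] -> independent A -> (#|A| <= k)%N.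

Variable (R : realFieldType).
Variable (f : {set 'I_n} -> R).

Definition monotone_set_fun : Prop :=
  forall A B : {set 'I_n}, A \subset B -> f A <= f B.

Definition submodular : Prop :=
  forall A B : {set 'I_n}, f (A :|: B) + f (A :&: B) <= f A + f B.

Definition marg (S : {set 'I_n}) (v : 'I_n) : R := f (v |: S) - f S.

Definition nu (S : {set 'I_n}) (u : 'I_n) : R :=
  marg [set s in S | (s < u)%N] u.

Variable (beta : R).

Definition conflict (S : {set 'I_n}) (v : 'I_n) : {set 'I_n} := nbhd v :&: S.

Definition pg_step (v : 'I_n) (S : {set 'I_n}) : {set 'I_n} :=
  if marg S v >= (1 + beta) * \sum_(u in conflict S v) nu S u
  then v |: (S :\: conflict S v) else S.

(* pg_state m = value of S after the first m vertices have been processed *)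
Fixpoint pg_state (m : nat) : {set 'I_n} :=
  match m with
  | 0 => set0
  | m'.+1 => let S := pg_state m' in
             if (insub m' : option 'I_n) is Some v then pg_step v S else S
  end.

Definition pg_C (i : 'I_n) : {set 'I_n} := conflict (pg_state i) i.

Definition pg_U : {set 'I_n} := \bigcup_(m < n.+1) pg_state m.

End PG.

(* Only vertices that have already been processed ever enter S, so u \in C_i
   makes v_i a neighbour of u that comes after u in the ordering. The indices
   i \in T with u \in C_i therefore form an independent set of later neighbours
   of u, which has at most k elements. *)
From HB Require Import structures.
From mathcomp Require Import all_boot all_order all_algebra.
Set Implicit Arguments. Unset Strict Implicit. Unset Printing Implicit Defensive.
Import Order.TTheory GRing.Theory Num.Theory.
Local Open Scope ring_scope.

Lemma independentS (n : nat) (e : rel 'I_n) (A B : {set 'I_n}) :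
  A \subset B -> independent e B -> independent e A.
Proof. by move=> /subsetP sAB indB x y /sAB xB /sAB; exact: indB. Qed.

Section PreemptiveGreedy.
Variables (n : nat) (e : rel 'I_n) (R : realFieldType).
Variables (f : {set 'I_n} -> R) (beta : R).

Lemma pg_step_sub (v : 'I_n) (S : {set 'I_n}) :
  pg_step e f beta v S \subset v |: S.
Proof.
rewrite /pg_step; case: ifP => _; last exact: subsetUr.
by rewrite setUS // subsetDl.
Qed.

Lemma mem_pg_state_lt (m : nat) (x : 'I_n) :
  x \in pg_state e f beta m -> (x < m)%N.
Proof.
elim: m => [|m IHm] /=; first by rewrite in_set0.
case: insubP => [v _ vE|_]; last by move/IHm/ltnW.
move/(subsetP (pg_step_sub v _)); rewrite in_setU1 => /predU1P[->|/IHm/ltnW //].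
by rewrite vE.
Qed.

Lemma pg_C_later_nbhd (u : 'I_n) :
  symmetric e ->
  [set i | u \in pg_C e f beta i] \subset nbhd e u :&: [set j : 'I_n | (u <= j)%N].
Proof.
move=> esym; apply/subsetP => i; rewrite !inE => /andP[eiu /mem_pg_state_lt ui].
by rewrite esym eiu ltnW.
Qed.

End PreemptiveGreedy.

Theorem lemma15 (k n : nat) (e : rel 'I_n) (R : realFieldType)
  (f : {set 'I_n} -> R) (beta : R) (T : {set 'I_n}) :
  (1 <= k)%N ->
  simple_graph e ->
  inductively_k_independent e k ->
  (forall A, 0 <= f A) -> monotone_set_fun f -> submodular f -> f set0 = 0 ->
  0 < beta ->
  independent e T ->
  [disjoint T & pg_U e f beta] ->
  forall u, u \in pg_U e f beta ->
    (#|[set i in T | u \in pg_C e f beta i]| <= k)%N.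
Proof.
move=> _ [esym _] k_ind _ _ _ _ _ indT _ u _.
apply: (k_ind u).
  apply: subset_trans _ (pg_C_later_nbhd f beta u esym).
  by apply/subsetP => i; rewrite !inE => /andP[].
by apply: independentS indT; apply/subsetP => i; rewrite inE => /andP[].
Qed.
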